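(* Let $b_1,\dots,b_5$ and $\alpha_1,\dots,\alpha_5$ be positive real numbers with $\sum_{i=1}^5\alpha_i=\pi$ (in particular $(b_1,\dots,b_5)$ may be any rearrangement of given positive reals $a_1,\dots,a_5$ with $b_1=a_1$). Then $$\sum_{i=1}^5 b_i\cos\alpha_i\;\le\;\frac{1+\sqrt5}{4}\cdot\frac{1}{b_1b_2b_3b_4b_5}\,\phi(b_1^2,b_2^2,b_3^2,b_4^2,b_5^2).$$
   Context: For real numbers $x_1,\dots,x_5$, define $\phi(x_1,x_2,x_3,x_4,x_5)=x_1x_2x_3+x_2x_3x_4+x_3x_4x_5+x_4x_5x_1+x_5x_1x_2$. *)

From Stdlib Require Import Reals.
Open Scope R_scope.

Definition phi (x1 x2 x3 x4 x5 : R) : R :=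
  x1*x2*x3 + x2*x3*x4 + x3*x4*x5 + x4*x5*x1 + x5*x1*x2.

(* Put w_i^2 = b_i b_{i+1} b_{i+2} / (b_{i+3} b_{i+4}) (indices mod 5). Then b_i = w_{i-2} w_i
   and sum w_i^2 = phi(b_1^2, ..., b_5^2) / (b_1 ... b_5), so the claim reads
   sum_k w w' cos(alpha_k) <= cos(pi/5) sum w_i^2, the products running around the
   5-cycle w_4, w_1, w_3, w_5, w_2 with the angles alpha_1, alpha_3, alpha_5, alpha_2, alpha_4.
   Realize the angles as differences of directions t_k of the plane vectors
   w (cos t_k, sin t_k); as the angles sum to pi, the closing direction is t_1 + pi. Each
   cos term is then an inner product, and it remains to bound the quadratic form
   x1x2 + x2x3 + x3x4 + x4x5 - x5x1 by cos(pi/5) = (1 + sqrt 5)/4 times the squared norm,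
   which is a sum-of-squares identity. *)
From Stdlib Require Import Reals Lra Nsatz.
Open Scope R_scope.

(* [g] is the golden ratio conjugate, so [(1 + g) / 2 = cos (PI / 5)]. *)
Lemma signed_cycle_form_le (g x1 x2 x3 x4 x5 : R) : g * g + g = 1 -> 0 < g ->
  x1*x2 + x2*x3 + x3*x4 + x4*x5 - x5*x1
  <= (1 + g) / 2 * (x1*x1 + x2*x2 + x3*x3 + x4*x4 + x5*x5).
Proof.
intros Hg.
(* Stated before [0 < g] enters the context, which [nsatz] cannot handle. *)
assert (sos : (1 + g) * (x1*x1 + x2*x2 + x3*x3 + x4*x4 + x5*x5)
              - 2 * (x1*x2 + x2*x3 + x3*x4 + x4*x5 - x5*x1)
  = (1 + g) * ((x1 - g*(x2 - x5)) * (x1 - g*(x2 - x5)))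
  + (1 + g) * ((x3 - g*(x2 + x4)) * (x3 - g*(x2 + x4)))
  + (x5 - x4 + g*x2) * (x5 - x4 + g*x2)) by nsatz.
intros g_pos.
assert (0 <= (1 + g) * ((x1 - g*(x2 - x5)) * (x1 - g*(x2 - x5))))
  by (apply Rmult_le_pos; [lra | apply Rle_0_sqr]).
assert (0 <= (1 + g) * ((x3 - g*(x2 + x4)) * (x3 - g*(x2 + x4))))
  by (apply Rmult_le_pos; [lra | apply Rle_0_sqr]).
assert (0 <= (x5 - x4 + g*x2) * (x5 - x4 + g*x2)) by apply Rle_0_sqr.
lra.
Qed.

Lemma golden_conjugate_sqrt5 :
  let g := (sqrt 5 - 1) / 2 in g * g + g = 1 /\ 0 < g /\ (1 + g) / 2 = (1 + sqrt 5) / 4.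
Proof.
assert (H5 : sqrt 5 * sqrt 5 = 5) by (apply sqrt_sqrt; lra).
assert (1 < sqrt 5) by (rewrite <- sqrt_1; apply sqrt_lt_1_alt; lra).
simpl; repeat split; [nra | lra | lra].
Qed.

Lemma signed_cycle_cos_le (u1 u2 u3 u4 u5 t1 t2 t3 t4 t5 : R) :
  u1*u2 * cos (t2 - t1) + u2*u3 * cos (t3 - t2) + u3*u4 * cos (t4 - t3)
  + u4*u5 * cos (t5 - t4) - u5*u1 * cos (t5 - t1)
  <= (1 + sqrt 5) / 4 * (u1*u1 + u2*u2 + u3*u3 + u4*u4 + u5*u5).
Proof.
destruct golden_conjugate_sqrt5 as (Hg & g_pos & <-).
rewrite !cos_minus.
assert (C := signed_cycle_form_le _ (u1 * cos t1) (u2 * cos t2) (u3 * cos t3)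
               (u4 * cos t4) (u5 * cos t5) Hg g_pos).
assert (S := signed_cycle_form_le _ (u1 * sin t1) (u2 * sin t2) (u3 * sin t3)
               (u4 * sin t4) (u5 * sin t5) Hg g_pos).
assert (unit : forall u t, u * u = u * cos t * (u * cos t) + u * sin t * (u * sin t)).
{ intros u t. rewrite <- (Rmult_1_r (u * u)), <- (sin2_cos2 t). unfold Rsqr. ring. }
rewrite (unit u1 t1), (unit u2 t2), (unit u3 t3), (unit u4 t4), (unit u5 t5).
lra.
Qed.

Lemma cycle_cos_le_of_sum_PI (u1 u2 u3 u4 u5 a1 a2 a3 a4 a5 : R) :
  a1 + a2 + a3 + a4 + a5 = PI ->
  u1*u2 * cos a1 + u2*u3 * cos a2 + u3*u4 * cos a3 + u4*u5 * cos a4 + u5*u1 * cos a5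
  <= (1 + sqrt 5) / 4 * (u1*u1 + u2*u2 + u3*u3 + u4*u4 + u5*u5).
Proof.
intros Hsum.
assert (B := signed_cycle_cos_le u1 u2 u3 u4 u5
               0 a1 (a1 + a2) (a1 + a2 + a3) (a1 + a2 + a3 + a4)).
replace (a1 - 0) with a1 in B by ring.
replace (a1 + a2 - a1) with a2 in B by ring.
replace (a1 + a2 + a3 - (a1 + a2)) with a3 in B by ring.
replace (a1 + a2 + a3 + a4 - (a1 + a2 + a3)) with a4 in B by ring.
replace (a1 + a2 + a3 + a4 - 0) with (PI - a5) in B by lra.
rewrite Rtrigo_facts.cos_pi_minus in B.
lra.
Qed.

Definition tri_ratio (a b c d e : R) : R := a * b * c / (d * e).

Lemma tri_ratio_pos (a b c d e : R) :
  0 < a -> 0 < b -> 0 < c -> 0 < d -> 0 < e -> 0 <= tri_ratio a b c d e.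
Proof.
intros; unfold tri_ratio.
apply Rlt_le, Rdiv_lt_0_compat; repeat apply Rmult_lt_0_compat; assumption.
Qed.

Lemma tri_ratio_mul_shift (a b c d e : R) : b <> 0 -> c <> 0 -> d <> 0 -> e <> 0 ->
  tri_ratio d e a b c * tri_ratio a b c d e = a * a.
Proof. intros; unfold tri_ratio; field; auto. Qed.

Lemma sqrt_mul_sqrt_eq (x y b : R) : 0 <= x -> 0 <= y -> 0 <= b ->
  x * y = b * b -> sqrt x * sqrt y = b.
Proof. intros Hx Hy Hb Hxy. rewrite <- sqrt_mult, Hxy by assumption. apply sqrt_square, Hb. Qed.

Lemma sqrt_tri_ratio_mul_shift (a b c d e : R) :
  0 < a -> 0 < b -> 0 < c -> 0 < d -> 0 < e ->
  sqrt (tri_ratio d e a b c) * sqrt (tri_ratio a b c d e) = a.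
Proof.
intros; apply sqrt_mul_sqrt_eq; try apply tri_ratio_pos; auto with real.
apply tri_ratio_mul_shift; auto with real.
Qed.

Lemma sum_tri_ratio_rot (b1 b2 b3 b4 b5 : R) :
  b1 <> 0 -> b2 <> 0 -> b3 <> 0 -> b4 <> 0 -> b5 <> 0 ->
  tri_ratio b1 b2 b3 b4 b5 + tri_ratio b2 b3 b4 b5 b1 + tri_ratio b3 b4 b5 b1 b2
  + tri_ratio b4 b5 b1 b2 b3 + tri_ratio b5 b1 b2 b3 b4
  = 1 / (b1 * b2 * b3 * b4 * b5) * phi (b1^2) (b2^2) (b3^2) (b4^2) (b5^2).
Proof. intros; unfold tri_ratio, phi; field; repeat split; assumption. Qed.

Theorem lemma2 (b1 b2 b3 b4 b5 al1 al2 al3 al4 al5 : R) :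
  0 < b1 -> 0 < b2 -> 0 < b3 -> 0 < b4 -> 0 < b5 ->
  0 < al1 -> 0 < al2 -> 0 < al3 -> 0 < al4 -> 0 < al5 ->
  al1 + al2 + al3 + al4 + al5 = PI ->
  b1 * cos al1 + b2 * cos al2 + b3 * cos al3 + b4 * cos al4 + b5 * cos al5
  <= (1 + sqrt 5) / 4 * (1 / (b1 * b2 * b3 * b4 * b5))
     * phi (b1^2) (b2^2) (b3^2) (b4^2) (b5^2).
Proof.
intros h1 h2 h3 h4 h5 _ _ _ _ _ Hsum.
set (T1 := tri_ratio b1 b2 b3 b4 b5); set (T2 := tri_ratio b2 b3 b4 b5 b1);
set (T3 := tri_ratio b3 b4 b5 b1 b2); set (T4 := tri_ratio b4 b5 b1 b2 b3);
set (T5 := tri_ratio b5 b1 b2 b3 b4).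
assert (e1 : sqrt T4 * sqrt T1 = b1) by (apply sqrt_tri_ratio_mul_shift; assumption).
assert (e2 : sqrt T5 * sqrt T2 = b2) by (apply sqrt_tri_ratio_mul_shift; assumption).
assert (e3 : sqrt T1 * sqrt T3 = b3) by (apply sqrt_tri_ratio_mul_shift; assumption).
assert (e4 : sqrt T2 * sqrt T4 = b4) by (apply sqrt_tri_ratio_mul_shift; assumption).
assert (e5 : sqrt T3 * sqrt T5 = b5) by (apply sqrt_tri_ratio_mul_shift; assumption).
assert (B := cycle_cos_le_of_sum_PI (sqrt T4) (sqrt T1) (sqrt T3) (sqrt T5) (sqrt T2)
               al1 al3 al5 al2 al4 ltac:(lra)).
rewrite e1, e3, e5, e2, e4, !sqrt_sqrt in B by (apply tri_ratio_pos; assumption).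
rewrite Rmult_assoc, <- sum_tri_ratio_rot by auto with real.
fold T1 T2 T3 T4 T5.
lra.
Qed.
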